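(* $\operatorname{add}(\mathcal{N})_{\mathrm{game}^*}^{\mathrm{II}} = \mathfrak{c}$. That is, if $\mathcal{A}\subseteq\omega^\omega$ and Player II has a winning strategy in the anti-localizing* game with respect to $\mathcal{A}$, then $|\mathcal{A}|=\mathfrak{c}$ (and such $\mathcal{A}$ of size $\mathfrak{c}$ exist).
   Context: For $k\in\omega$, $[\omega]^{k+1}$ denotes the set of subsets of $\omega$ of size $k+1$. For $\mathcal{A}\subseteq\omega^\omega$, the anti-localizing* game with respect to $\mathcal{A}$: at round $k$, Player I plays $a_k\in[\omega]^{k+1}$ and then Player II plays $n_k\in\omega$. Player II wins iff $\langle n_k:k\in\omega\rangle\in\mathcal{A}$ and $n_k\notin a_k$ for infinitely many $k$. $\operatorname{add}(\mathcal{N})_{\mathrm{game}^*}^{\mathrm{II}}$ is the least $|\mathcal{A}|$ such that Player II has a winning strategy in this game; $\mathfrak{c}=2^{\aleph_0}$. *)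

From mathcomp Require Import all_boot.
From mathcomp Require Import finmap.
From mathcomp Require Import boolp classical_sets cardinality.
Set Implicit Arguments. Unset Strict Implicit. Unset Printing Implicit Defensive.
Local Open Scope fset_scope.

(* Round k: Player I plays a_k ∈ [ω]^{k+1} (a finite set of naturals of size k+1),
   then Player II plays n_k ∈ ω.
   A strategy for Player II maps the history (a_0, ..., a_k) of Player I's moves
   to n_k (II's own earlier moves are determined by the strategy). *)
Definition IIstrategy := seq {fset nat} -> nat.

Definition legal_I (a : nat -> {fset nat}) : Prop := forall k, #|` a k| = k.+1.

Definition II_moves (sigma : IIstrategy) (a : nat -> {fset nat}) : nat -> nat :=
  fun k => sigma [seq a i | i <- iota 0 k.+1].

Definition II_wins_play (A : set (nat -> nat)) (a : nat -> {fset nat}) (n : nat -> nat) : Prop :=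
  A n /\ (forall m, exists k, (m <= k)%N /\ n k \notin a k).

Definition winning_II (A : set (nat -> nat)) (sigma : IIstrategy) : Prop :=
  forall a, legal_I a -> II_wins_play A a (II_moves sigma a).

Definition II_has_winning_strategy (A : set (nat -> nat)) : Prop :=
  exists sigma, winning_II A sigma.

From mathcomp Require Import all_boot finmap boolp classical_sets cardinality.
Set Implicit Arguments. Unset Strict Implicit. Unset Printing Implicit Defensive.
Local Open Scope fset_scope.
Local Open Scope card_scope.

(* Upper bound. Sets of functions nat -> nat inject into nat -> bool by coding
   a function through the characteristic function of its graph.

   Lower bound. Let sigma be a winning strategy of II for A. Every legal finite
   history s of Player I "splits": it has two legal proper extensions of the
   same length on which sigma answers differently. Otherwise sigma's answer at
   every length beyond s is forced, and Player I defeats sigma by playing, from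
   round size s on, a set of the right size containing the forced answer.
   Iterating a choice of splittings builds a binary tree of histories; each
   branch x : nat -> bool is a legal play of I, and II's responses along two
   different branches differ at the first splitting where the branches part.
   Since sigma is winning, these responses lie in A, so 2^omega injects into A.

   Existence. II wins on A = omega^omega by answering 1 + max a_k. *)

Definition prefix (a : nat -> {fset nat}) (L : nat) : seq {fset nat} :=
  [seq a i | i <- iota 0 L].

Lemma II_moves_prefix sigma a k : II_moves sigma a k = sigma (prefix a k.+1).
Proof. by []. Qed.

Lemma size_prefix a L : size (prefix a L) = L.
Proof. by rewrite size_map size_iota. Qed.

Lemma nth_prefix a L i : (i < L)%N -> nth fset0 (prefix a L) i = a i.
Proof. by move=> ltiL; rewrite (nth_map 0) ?size_iota // nth_iota. Qed.

Lemma take_prefix a n L : (n <= L)%N -> take n (prefix a L) = prefix a n.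
Proof. by move=> lenL; rewrite /prefix -map_take take_iota (minn_idPl lenL). Qed.

Definition legal_history (s : seq {fset nat}) : Prop :=
  forall i, (i < size s)%N -> #|` nth fset0 s i| = i.+1.

Lemma legal_prefix a L : legal_I a -> legal_history (prefix a L).
Proof. by move=> La i; rewrite size_prefix => ltiL; rewrite nth_prefix. Qed.

Definition extends (t s : seq {fset nat}) : Prop := take (size s) t = s.

Definition continue_with (s : seq {fset nat}) (b : nat -> {fset nat}) (i : nat)
  : {fset nat} :=
  if (i < size s)%N then nth fset0 s i else b i.

Lemma prefix_continue_with s b : prefix (continue_with s b) (size s) = s.
Proof.
apply: (@eq_from_nth _ fset0); rewrite size_prefix // => i lti.
by rewrite nth_prefix // /continue_with lti.
Qed.

Lemma legal_continue_with s b :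
  legal_history s -> legal_I b -> legal_I (continue_with s b).
Proof. by move=> Ls Lb i; rewrite /continue_with; case: ifP => [/Ls|]. Qed.

Definition interval_move (m i : nat) : {fset nat} := [fset x in iota m i.+1].

Lemma card_interval_move m i : #|` interval_move m i| = i.+1.
Proof. by rewrite card_fseq undup_id ?iota_uniq // size_iota. Qed.

Lemma mem_interval_move m i : m \in interval_move m i.
Proof. by rewrite /interval_move inE /= eqxx. Qed.

Lemma legal_interval_moves (m : nat -> nat) :
  legal_I (fun i => interval_move (m i) i).
Proof. by move=> i; apply: card_interval_move. Qed.

Definition splitting (sigma : IIstrategy) (s t1 t2 : seq {fset nat}) : Prop :=
  [/\ legal_history t1, legal_history t2, size t1 = size t2,
      (size s < size t1)%N &
      [/\ extends t1 s, extends t2 s & sigma t1 <> sigma t2]].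

(* The default continuation of s, used to name the forced answers. *)
Definition default_play (s : seq {fset nat}) : nat -> {fset nat} :=
  continue_with s (interval_move 0).

Lemma forced_answers sigma s :
  legal_history s -> ~ (exists t1 t2, splitting sigma s t1 t2) ->
  forall t, legal_history t -> (size s < size t)%N -> extends t s ->
    sigma t = sigma (prefix (default_play s) (size t)).
Proof.
move=> Ls nsplit t Lt ltst ext; apply: contrapT => neq; apply: nsplit.
exists t, (prefix (default_play s) (size t)); split; rewrite ?size_prefix //.
- exact/legal_prefix/legal_continue_with/legal_interval_moves.
- by rewrite /extends take_prefix ?prefix_continue_with // ltnW.
Qed.

(* Against a winning strategy every legal history splits: otherwise Player I
   continues s by intervals containing the forced answers, and II's moves
   eventually always lie in I's moves. *)
Lemma winning_splits A sigma s :
  winning_II A sigma -> legal_history s -> exists t1 t2, splitting sigma s t1 t2.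
Proof.
move=> win Ls; apply: contrapT => nsplit.
pose forced j := sigma (prefix (default_play s) j.+1).
pose a := continue_with s (fun i => interval_move (forced i) i).
have La : legal_I a by apply/legal_continue_with/legal_interval_moves.
have [_ /(_ (size s)) [k [lesk notin]]] := win a La.
move: notin; rewrite II_moves_prefix.
rewrite (forced_answers Ls nsplit) ?size_prefix //.
- by rewrite /a /continue_with ltnNge lesk mem_interval_move.
- exact: legal_prefix.
- by rewrite /extends take_prefix ?prefix_continue_with // ltnW.
Qed.

Section SplittingTree.
Variables (sigma : IIstrategy) (split : seq {fset nat} -> seq {fset nat} * seq {fset nat}).
Hypothesis splitP : forall s, legal_history s -> splitting sigma s (split s).1 (split s).2.

Fixpoint tree_node (x : nat -> bool) (m : nat) : seq {fset nat} :=
  if m is m'.+1 then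
    if x m' then (split (tree_node x m')).1 else (split (tree_node x m')).2
  else [::].

Lemma tree_node_legal x m :
  legal_history (tree_node x m) /\ (m <= size (tree_node x m))%N.
Proof.
elim: m => [|m [Ls lems]] /=; first by split => // i.
have [L1 L2 eqsz ltsz _] := splitP Ls.
by case: (x m); split => //; rewrite -?eqsz; apply: leq_ltn_trans ltsz.
Qed.

Lemma tree_node_extends x m m' : (m <= m')%N ->
  extends (tree_node x m') (tree_node x m).
Proof.
move=> /subnK <-; rewrite /extends; elim: (m' - m) => [|d IH].
  by rewrite add0n take_size.
rewrite addSn /=.
have [_ _ _ _ [ext1 ext2 _]] := splitP (proj1 (tree_node_legal x (d + m))).
have lesz : (size (tree_node x m) <= size (tree_node x (d + m)))%N.
  by move: (congr1 size IH); rewrite size_take; case: ltnP => [/ltnW|_ ->].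
by case: ifP => _; rewrite -(take_takel _ lesz) ?ext1 ?ext2 IH.
Qed.

Definition branch_play (x : nat -> bool) (i : nat) : {fset nat} :=
  nth fset0 (tree_node x i.+1) i.

Lemma prefix_branch_play x m :
  prefix (branch_play x) (size (tree_node x m)) = tree_node x m.
Proof.
apply: (@eq_from_nth _ fset0); rewrite size_prefix // => i ltim.
have ltii : (i < size (tree_node x i.+1))%N by case: (tree_node_legal x i.+1).
rewrite nth_prefix // /branch_play.
rewrite -(tree_node_extends x (leq_maxl m i.+1)).
rewrite -(tree_node_extends x (leq_maxr m i.+1)) !nth_take //.
Qed.

Lemma legal_branch_play x : legal_I (branch_play x).
Proof. by move=> i; have [Lnode lesz] := tree_node_legal x i.+1; apply: Lnode. Qed.

Lemma branch_answer x m :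
  II_moves sigma (branch_play x) (size (tree_node x m.+1)).-1 =
  sigma (tree_node x m.+1).
Proof.
have possz : (0 < size (tree_node x m.+1))%N.
  by case: (tree_node_legal x m.+1) => _; apply: leq_trans.
by rewrite II_moves_prefix prednK // prefix_branch_play.
Qed.

Lemma tree_node_agree x y m :
  (forall i, (i < m)%N -> x i = y i) -> tree_node x m = tree_node y m.
Proof.
elim: m => [|m IH] agree //=.
have -> : x m = y m by apply: agree.
by rewrite IH // => i /ltnW; apply: agree.
Qed.

Lemma branch_answers_inj x y :
  x <> y -> II_moves sigma (branch_play x) <> II_moves sigma (branch_play y).
Proof.
move=> neqxy eqmoves.
have [m xym minm] : exists2 m, x m != y m & forall i, (i < m)%N -> x i = y i.
  have exd : exists m, x m != y m.
    apply: contrapT => nexd; apply/neqxy/funext => m.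
    by apply/eqP; apply: contrapT => neqm; apply: nexd; exists m; apply/negP.
  case: (ex_minnP exd) => m xym minm; exists m => // i ltim.
  by apply/eqP; apply: contraTT ltim => /minm; rewrite -leqNgt.
set s := tree_node x m.
have eqs : tree_node y m = s by rewrite -(tree_node_agree minm).
have [_ _ eqsz _ [_ _ neqans]] := splitP (proj1 (tree_node_legal x m)).
have nodeE z : tree_node z m = s ->
  tree_node z m.+1 = if z m then (split s).1 else (split s).2.
  by move=> /= ->.
have sizeE z : tree_node z m = s -> size (tree_node z m.+1) = size (split s).1.
  by move=> /nodeE ->; case: (z m); rewrite ?eqsz.
have := congr1 (fun g => g (size (split s).1).-1) eqmoves.
rewrite -{1}(sizeE x erefl) -(sizeE y eqs) !branch_answer.
rewrite (nodeE x erefl) (nodeE y eqs).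
by move: xym neqans; case: (x m); case: (y m) => //= _ neqans /esym.
Qed.

End SplittingTree.

Lemma winning_card_ge A sigma : winning_II A sigma -> [set: nat -> bool] #<= A.
Proof.
move=> win.
have [split splitP] : {split : seq {fset nat} -> seq {fset nat} * seq {fset nat} &
    forall s, legal_history s -> splitting sigma s (split s).1 (split s).2}.
  apply: (@choice _ _ (fun s t => legal_history s -> splitting sigma s t.1 t.2)).
  move=> s; case: (pselect (legal_history s)) => [Ls|nLs]; last by exists ([::], [::]) => /nLs.
  by have [t1 [t2 spl]] := winning_splits win Ls; exists (t1, t2).
apply/pcard_leP/injfunPex; exists (fun x => II_moves sigma (branch_play split x)).
  by move=> x _; apply: (win _ (legal_branch_play splitP x)).1.
move=> x y _ _ eqxy; apply: contrapT => neqxy.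
exact: (branch_answers_inj splitP neqxy eqxy).
Qed.

Definition graph_code (h : nat -> nat) (n : nat) : bool :=
  if @choice.unpickle (nat * nat)%type n is Some p then h p.1 == p.2 else false.

Lemma graph_code_inj : injective graph_code.
Proof.
move=> h h' eqcode; apply: funext => i.
have := congr1 (fun g => g (choice.pickle (i, h i))) eqcode.
by rewrite /graph_code choice.pickleK /= eqxx => /esym/eqP.
Qed.

Lemma card_le_bool_functions (A : set (nat -> nat)) : A #<= [set: nat -> bool].
Proof.
apply: card_le_trans (card_leT A) _.
by apply/pcard_leP/injfunPex; exists graph_code => // x y _ _; apply: graph_code_inj.
Qed.

Lemma II_wins_everything : II_has_winning_strategy [set: nat -> nat].
Proof.
exists (fun h => (\max_(n <- last fset0 h) n).+1) => a _.
split => // m; exists m; split => //.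
rewrite II_moves_prefix /prefix /= last_map.
have -> : last 0%N (iota 1 m) = m.
  by case: m => // m; rewrite -nth_last size_iota nth_iota.
by apply/negP => /(leq_bigmax_seq (P := xpredT) (F := id)) /(_ isT); rewrite ltnn.
Qed.

Theorem mainTheorem11 :
  (forall A : set (nat -> nat), II_has_winning_strategy A ->
     card_eq A [set: nat -> bool]) /\
  (exists A : set (nat -> nat), II_has_winning_strategy A).
Proof.
split; last by exists setT; apply: II_wins_everything.
move=> A [sigma win]; rewrite card_eq_le; apply/andP; split.
- exact: card_le_bool_functions.
- exact: winning_card_ge win.
Qed.
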